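(* Let $\varphi(s,v)=\vec c(s)+v\vec q(s)$ be a developable timelike ruled surface of type $M^1_-$ in $\mathbb{R}^3_1$, and let $R$ be a nonzero constant. A developable timelike ruled surface $\varphi^*$ of type $M^1_+$ or $M^1_-$ with striction curve $\vec c^*=\vec c+R\vec a$ is a Mannheim offset of $\varphi$ if and only if $$\frac{d\kappa}{ds}=-\frac{1}{R}\left(R^2\kappa^2\left(\frac{ds_1}{ds}\right)^2-1\right)-\frac{1}{ds_1/ds}\frac{d^2s_1}{ds^2}\kappa .$$
   Context: Work in Minkowski 3-space $\mathbb{R}^3_1$, i.e. $\mathbb{R}^3$ with $\langle x,y\rangle=-x_1y_1+x_2y_2+x_3y_3$, norm $\|x\|=\sqrt{|\langle x,x\rangle|}$, and Lorentzian cross product $x\times y=(x_2y_3-x_3y_2,\,x_1y_3-x_3y_1,\,x_2y_1-x_1y_2)$. A ruled surface is $\varphi(s,v)=\vec c(s)+v\vec q(s)$, where $\vec q$ is a unit non-null vector field with $\langle\vec q,\vec q\rangle=\varepsilon_2\in\{\pm1\}$, $d\vec q/ds$ is non-null, and the base curve $\vec c$ is the striction curve, i.e. $\langle d\vec q/ds,d\vec c/ds\rangle=0$; $s$ is the arc-length parameter of $\vec c$. Its Frenet frame is $\{\vec q,\vec h,\vec a\}$ with central normal $\vec h=\frac{d\vec q/ds}{\|d\vec q/ds\|}$ and asymptotic normal $\vec a=\frac{(d\vec q/ds)\times\vec q}{\|d\vec q/ds\|}$. The surface is of type $M^1_-$ if $\vec q$ is timelike and $\vec h$ spacelike; of type $M^1_+$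 if $\vec q$ and $\vec h$ are both spacelike (both timelike surfaces). Let $s_1$ be the arc-length parameter of the spherical image curve traced by $\vec q$, and $\kappa$ the conical curvature of the directing cone; for types $M^1_\pm$: $d\vec q/ds_1=\vec h$, $d\vec h/ds_1=-\varepsilon_2\vec q+\kappa\vec a$, $d\vec a/ds_1=\varepsilon_2\kappa\vec h$. A ruled surface is developable iff its distribution parameter $\det(d\vec c/ds,\vec q,d\vec q/ds)/\langle d\vec q/ds,d\vec q/ds\rangle$ vanishes identically. A ruled surface $\varphi^*(s,v)=\vec c^*(s)+v\vec q^*(s)$ with striction curve $\vec c^*$ and Frenet frame $\{\vec q^*,\vec h^*,\vec a^*\}$ is a Mannheim offset of the timelike ruled surface $\varphi$ if there is a one-to-one correspondence between their rulings such that $\vec h^*=\vec a$. *)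

From Stdlib Require Import Reals.
From Coquelicot Require Import Coquelicot.
Open Scope R_scope.

Record V3 := mkV3 { v1 : R; v2 : R; v3 : R }.

Definition vadd (x y : V3) : V3 := mkV3 (v1 x + v1 y) (v2 x + v2 y) (v3 x + v3 y).
Definition vscale (k : R) (x : V3) : V3 := mkV3 (k * v1 x) (k * v2 x) (k * v3 x).
Definition vopp (x : V3) : V3 := vscale (-1) x.

Definition lip (x y : V3) : R := - v1 x * v1 y + v2 x * v2 y + v3 x * v3 y.
Definition lnorm (x : V3) : R := sqrt (Rabs (lip x x)).
Definition lcross (x y : V3) : V3 :=
  mkV3 (v2 x * v3 y - v3 x * v2 y) (v1 x * v3 y - v3 x * v1 y) (v2 x * v1 y - v1 x * v2 y).
Definition det3 (x y z : V3) : R :=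
  v1 x * (v2 y * v3 z - v3 y * v2 z) - v2 x * (v1 y * v3 z - v3 y * v1 z)
  + v3 x * (v1 y * v2 z - v2 y * v1 z).

Definition timelike (x : V3) : Prop := lip x x < 0.
Definition spacelike (x : V3) : Prop := 0 < lip x x.

Definition interval (a b : Rbar) (s : R) : Prop := Rbar_lt a s /\ Rbar_lt s b.

Definition vD (f : R -> V3) (s : R) : V3 :=
  mkV3 (Derive (fun t => v1 (f t)) s) (Derive (fun t => v2 (f t)) s)
       (Derive (fun t => v3 (f t)) s).

Definition smooth_on (I : R -> Prop) (g : R -> R) : Prop :=
  forall n s, I s -> ex_derive_n g n s.
Definition vsmooth_on (I : R -> Prop) (f : R -> V3) : Prop :=
  smooth_on I (fun t => v1 (f t)) /\ smooth_on I (fun t => v2 (f t)) /\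
  smooth_on I (fun t => v3 (f t)).

(** Ruled surface phi(s,v) = c(s) + v q(s) on parameter set I:
    q unit non-null with <q,q> = eps2 in {1,-1}, dq/ds non-null,
    c the striction curve (<dq/ds, dc/ds> = 0). *)
Definition ruled_surface (I : R -> Prop) (c q : R -> V3) : Prop :=
  vsmooth_on I c /\ vsmooth_on I q /\
  (exists eps2 : R, (eps2 = 1 \/ eps2 = -1) /\ forall s, I s -> lip (q s) (q s) = eps2) /\
  (forall s, I s -> lip (vD q s) (vD q s) <> 0) /\
  (forall s, I s -> lip (vD q s) (vD c s) = 0).

Definition arclength_param (I : R -> Prop) (c : R -> V3) : Prop :=
  forall s, I s -> lnorm (vD c s) = 1.

Definition central_normal (q : R -> V3) (s : R) : V3 :=
  vscale (/ lnorm (vD q s)) (vD q s).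
Definition asymptotic_normal (q : R -> V3) (s : R) : V3 :=
  vscale (/ lnorm (vD q s)) (lcross (vD q s) (q s)).

Definition distribution_parameter (c q : R -> V3) (s : R) : R :=
  det3 (vD c s) (q s) (vD q s) / lip (vD q s) (vD q s).
Definition developable (I : R -> Prop) (c q : R -> V3) : Prop :=
  forall s, I s -> distribution_parameter c q s = 0.

Definition type_Mminus (I : R -> Prop) (q : R -> V3) : Prop :=
  forall s, I s -> timelike (q s) /\ spacelike (central_normal q s).
Definition type_Mplus (I : R -> Prop) (q : R -> V3) : Prop :=
  forall s, I s -> spacelike (q s) /\ spacelike (central_normal q s).

(** ds1/ds, where s1 is the arc length of the spherical image of q. *)
Definition dsig1 (q : R -> V3) (s : R) : R := lnorm (vD q s).

(** Conical curvature kappa: the coefficient of a in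
    dh/ds1 = -eps2 q + kappa a, where dh/ds1 = (dh/ds)/(ds1/ds);
    since a is orthogonal to q and h, kappa = <dh/ds1, a>/<a,a>. *)
Definition conical_curvature (q : R -> V3) (s : R) : R :=
  lip (vD (central_normal q) s) (asymptotic_normal q s)
  / (dsig1 q s * lip (asymptotic_normal q s) (asymptotic_normal q s)).

(** phi* = (cs, qs) is a Mannheim offset of phi = (c, q), the rulings
    corresponding through the common parameter s: h* = a. *)
Definition mannheim_offset (I : R -> Prop) (c q cs qs : R -> V3) : Prop :=
  forall s, I s -> central_normal qs s = asymptotic_normal q s.

(** The surface phi* (its rulings taken with either orientation,
    i.e. phi*(s,v) or its reparametrization phi*(s,-v)) is a Mannheim
    offset of phi. *)
Definition mannheim_offset_surface (I : R -> Prop) (c q cs qs : R -> V3) : Prop :=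
  mannheim_offset I c q cs qs \/ mannheim_offset I c q cs (fun s => vopp (qs s)).

From Stdlib Require Import Reals Lra Classical.
From Coquelicot Require Import Coquelicot.
Open Scope R_scope.

(** Along the striction curve [c' = q], the Frenet equations [h' = f q + f kappa a] and
    [a' = - f kappa h] (with [f = ds1/ds]) give [c*' = q - g h] for [g = R f kappa].
    Developability of [phi*] makes its ruling parallel to [c*'], i.e. [q* = lambda (q - g h)],
    and [q*] being non-null forces [lambda <> 0] and [g^2 <> 1].  Differentiating
    [<q*, h> = - lambda g] and using the striction condition [<q*', c*'> = 0] gives
    [<q*', h> (g^2 - 1) = lambda (g' + f (g^2 - 1))].  Hence [h* = +-a] iff [q*' _|_ h]
    (conversely [q*'] is then a multiple of [a] whose coefficient cannot change sign)
    iff [g' = - f (g^2 - 1)], which is the stated equation for [kappa]. *)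

(** * Smooth functions on an open set *)

Fixpoint ex_derive_upto (U : R -> Prop) (k : nat) (g : R -> R) : Prop :=
  match k with
  | O => True
  | S k => (forall t, U t -> ex_derive g t) /\ ex_derive_upto U k (Derive g)
  end.

Definition Cinfty (U : R -> Prop) (g : R -> R) : Prop := forall k, ex_derive_upto U k g.

Lemma smooth_on_Cinfty (U : R -> Prop) (g : R -> R) : smooth_on U g -> Cinfty U g.
Proof.
  intros H k. enough (Hn : forall m, ex_derive_upto U k (Derive_n g m)) by exact (Hn 0%nat).
  induction k as [|k IH]; intros m; simpl; [easy|].
  split; [intros t Ht; exact (H (S m) t Ht) | exact (IH (S m))].
Qed.

Lemma ex_derive_upto_S (U : R -> Prop) (k : nat) (g : R -> R) :
  ex_derive_upto U (S k) g -> ex_derive_upto U k g.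
Proof.
  revert g; induction k as [|k IH]; intros g [Hg HDg]; simpl; [easy|].
  split; [exact Hg | exact (IH _ HDg)].
Qed.

Section DerivableUpto.

Variable U : R -> Prop.
Hypothesis U_open : open U.

Lemma locally_eq_on (g1 g2 : R -> R) (t : R) :
  U t -> (forall t, U t -> g1 t = g2 t) -> locally t (fun y => g1 y = g2 y).
Proof. intros Ht E. exact (filter_imp U _ E (U_open t Ht)). Qed.

Lemma ex_derive_upto_ext (k : nat) (g1 g2 : R -> R) :
  (forall t, U t -> g1 t = g2 t) -> ex_derive_upto U k g1 -> ex_derive_upto U k g2.
Proof.
  revert g1 g2; induction k as [|k IH]; intros g1 g2 E; simpl; [easy|].
  intros [Hg HDg]; split.
  - intros t Ht. apply (ex_derive_ext_loc g1); auto. apply locally_eq_on; auto.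
  - apply (IH (Derive g1)); auto.
    intros t Ht. apply Derive_ext_loc, locally_eq_on; auto.
Qed.

Lemma ex_derive_upto_const (k : nat) (c : R) : ex_derive_upto U k (fun _ => c).
Proof.
  revert c; induction k as [|k IH]; intros c; simpl; [easy|].
  split; [intros; apply ex_derive_const|].
  apply (ex_derive_upto_ext _ (fun _ => 0)); auto. intros; now rewrite Derive_const.
Qed.

Lemma ex_derive_upto_plus (k : nat) (g1 g2 : R -> R) :
  ex_derive_upto U k g1 -> ex_derive_upto U k g2 ->
  ex_derive_upto U k (fun t => g1 t + g2 t).
Proof.
  revert g1 g2; induction k as [|k IH]; intros g1 g2; simpl; [easy|].
  intros [A1 B1] [A2 B2]; split.
  - intros t Ht; exact (ex_derive_plus g1 g2 t (A1 t Ht) (A2 t Ht)).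
  - apply (ex_derive_upto_ext _ (fun t => Derive g1 t + Derive g2 t)); auto.
    intros t Ht; rewrite Derive_plus; auto.
Qed.

Lemma ex_derive_upto_opp (k : nat) (g : R -> R) :
  ex_derive_upto U k g -> ex_derive_upto U k (fun t => - g t).
Proof.
  revert g; induction k as [|k IH]; intros g; simpl; [easy|].
  intros [A B]; split.
  - intros t Ht; exact (ex_derive_opp g t (A t Ht)).
  - apply (ex_derive_upto_ext _ (fun t => - Derive g t)); auto.
    intros t Ht; rewrite Derive_opp; auto.
Qed.

Lemma ex_derive_upto_mult (k : nat) (g1 g2 : R -> R) :
  ex_derive_upto U k g1 -> ex_derive_upto U k g2 ->
  ex_derive_upto U k (fun t => g1 t * g2 t).
Proof.
  revert g1 g2; induction k as [|k IH]; intros g1 g2; [easy|].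
  intros H1 H2.
  pose proof (ex_derive_upto_S _ _ _ H1) as H1'. pose proof (ex_derive_upto_S _ _ _ H2) as H2'.
  destruct H1 as [A1 B1], H2 as [A2 B2]; split.
  - intros t Ht; apply ex_derive_mult; auto.
  - apply (ex_derive_upto_ext _ (fun t => Derive g1 t * g2 t + g1 t * Derive g2 t)).
    + intros t Ht; rewrite Derive_mult; auto.
    + apply ex_derive_upto_plus; auto.
Qed.

Lemma ex_derive_upto_inv (k : nat) (g : R -> R) :
  (forall t, U t -> g t <> 0) ->
  ex_derive_upto U k g -> ex_derive_upto U k (fun t => / g t).
Proof.
  intros Hg; revert g Hg; induction k as [|k IH]; intros g Hg H; [easy|].
  pose proof (ex_derive_upto_S _ _ _ H) as H'. destruct H as [A B]; split.
  - intros t Ht; apply ex_derive_inv; auto.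
  - apply (ex_derive_upto_ext _ (fun t => - Derive g t * (/ g t * / g t))).
    + intros t Ht; rewrite Derive_inv; auto. field; auto.
    + apply ex_derive_upto_mult; [apply ex_derive_upto_opp|apply ex_derive_upto_mult]; auto.
Qed.

Lemma ex_derive_upto_sqrt (k : nat) (g : R -> R) :
  (forall t, U t -> 0 < g t) ->
  ex_derive_upto U k g -> ex_derive_upto U k (fun t => sqrt (g t)).
Proof.
  intros Hg; revert g Hg; induction k as [|k IH]; intros g Hg H; [easy|].
  pose proof (ex_derive_upto_S _ _ _ H) as H'. destruct H as [A B].
  assert (Dsqrt : forall t, U t ->
    is_derive (fun t => sqrt (g t)) t (Derive g t * / (2 * sqrt (g t)))).
  { intros t Ht. apply is_derive_sqrt; auto. apply Derive_correct; auto. }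
  split.
  - intros t Ht. eexists; apply Dsqrt; auto.
  - apply (ex_derive_upto_ext _ (fun t => Derive g t * / (2 * sqrt (g t)))).
    + intros t Ht. symmetry. apply is_derive_unique, Dsqrt; auto.
    + apply ex_derive_upto_mult; auto. apply ex_derive_upto_inv.
      * intros t Ht. specialize (Hg t Ht). pose proof (sqrt_lt_R0 _ Hg). lra.
      * apply ex_derive_upto_mult; auto. apply ex_derive_upto_const.
Qed.

End DerivableUpto.

Section Cinfty.

Variable U : R -> Prop.
Hypothesis U_open : open U.

Lemma Cinfty_ext (g1 g2 : R -> R) :
  (forall t, U t -> g1 t = g2 t) -> Cinfty U g1 -> Cinfty U g2.
Proof. intros E H k. exact (ex_derive_upto_ext U U_open k g1 g2 E (H k)). Qed.

Lemma Cinfty_const (c : R) : Cinfty U (fun _ => c).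
Proof. intros k. exact (ex_derive_upto_const U U_open k c). Qed.

Lemma Cinfty_plus (g1 g2 : R -> R) :
  Cinfty U g1 -> Cinfty U g2 -> Cinfty U (fun t => g1 t + g2 t).
Proof. intros H1 H2 k. exact (ex_derive_upto_plus U U_open k g1 g2 (H1 k) (H2 k)). Qed.

Lemma Cinfty_opp (g : R -> R) : Cinfty U g -> Cinfty U (fun t => - g t).
Proof. intros H k. exact (ex_derive_upto_opp U U_open k g (H k)). Qed.

Lemma Cinfty_mult (g1 g2 : R -> R) :
  Cinfty U g1 -> Cinfty U g2 -> Cinfty U (fun t => g1 t * g2 t).
Proof. intros H1 H2 k. exact (ex_derive_upto_mult U U_open k g1 g2 (H1 k) (H2 k)). Qed.

Lemma Cinfty_inv (g : R -> R) :
  (forall t, U t -> g t <> 0) -> Cinfty U g -> Cinfty U (fun t => / g t).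
Proof. intros Hg H k. exact (ex_derive_upto_inv U U_open k g Hg (H k)). Qed.

Lemma Cinfty_sqrt (g : R -> R) :
  (forall t, U t -> 0 < g t) -> Cinfty U g -> Cinfty U (fun t => sqrt (g t)).
Proof. intros Hg H k. exact (ex_derive_upto_sqrt U U_open k g Hg (H k)). Qed.

Lemma Cinfty_Derive (g : R -> R) : Cinfty U g -> Cinfty U (Derive g).
Proof. intros H k. exact (proj2 (H (S k))). Qed.

Lemma Cinfty_ex_derive (g : R -> R) (t : R) : Cinfty U g -> U t -> ex_derive g t.
Proof. intros H. exact (proj1 (H 1%nat) t). Qed.

Lemma Cinfty_continuous (g : R -> R) (t : R) : Cinfty U g -> U t -> continuous g t.
Proof.
  intros H Ht. apply (@ex_derive_continuous R_AbsRing R_NormedModule).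
  exact (Cinfty_ex_derive g t H Ht).
Qed.

End Cinfty.

Lemma continuous_nonzero_sign (U : R -> Prop) (m : R -> R) :
  (forall x y z, U x -> U y -> x <= z <= y -> U z) ->
  (forall t, U t -> continuous m t) -> (forall t, U t -> m t <> 0) ->
  (forall t, U t -> 0 < m t) \/ (forall t, U t -> m t < 0).
Proof.
  intros Hconv Hc Hn.
  assert (IVT : forall (g : R -> R) x y, (forall t, U t -> continuous g t) ->
            U x -> U y -> x < y -> g x < 0 < g y -> exists z, U z /\ g z = 0).
  { intros g x y Hg Hx Hy Hxy [Hgx Hgy].
    destruct (Ranalysis5.IVT_interv g x y) as [z [Hz Ez]]; auto.
    - intros z Hz. apply continuity_pt_filterlim, Hg, (Hconv x y); auto.
    - exists z. split; auto. apply (Hconv x y); auto. }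
  assert (Hsame : forall x y, U x -> U y -> 0 < m x -> 0 < m y).
  { intros x y Hx Hy Hmx. destruct (Rlt_or_le 0 (m y)) as [|Hmy]; auto. exfalso.
    assert (Hmy' : m y < 0) by (pose proof (Hn y Hy); lra).
    destruct (Rtotal_order x y) as [Hxy|[<-|Hxy]]; [|lra|].
    - destruct (IVT (fun t => - m t) x y) as [z [Hz Ez]]; auto.
      + intros t Ht. exact (continuous_opp m t (Hc t Ht)).
      + lra.
      + apply (Hn z Hz). lra.
    - destruct (IVT m y x) as [z [Hz Ez]]; auto. apply (Hn z Hz Ez). }
  destruct (classic (exists x, U x /\ 0 < m x)) as [[x [Hx Hmx]]|Hneg].
  - left. intros t Ht. apply (Hsame x); auto.
  - right. intros t Ht. destruct (Rlt_or_le (m t) 0) as [|Hmt]; auto.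
    exfalso. apply Hneg. exists t. split; auto. pose proof (Hn t Ht). lra.
Qed.

(** * Minkowski 3-space *)

Definition vzero : V3 := mkV3 0 0 0.

Lemma V3_ext (x y : V3) : v1 x = v1 y -> v2 x = v2 y -> v3 x = v3 y -> x = y.
Proof. destruct x, y; simpl; intros; subst; auto. Qed.

Ltac V3_ring := apply V3_ext; unfold vadd, vscale, vopp, lcross, vzero; simpl; ring.

Ltac V3_lra E :=
  apply V3_ext; [apply (f_equal v1) in E | apply (f_equal v2) in E | apply (f_equal v3) in E];
  unfold vadd, vscale, vopp, lcross, vzero in E |- *; simpl in E |- *; lra.

Lemma lip_sym (x y : V3) : lip x y = lip y x.
Proof. unfold lip; ring. Qed.

Lemma lip_addl (x y z : V3) : lip (vadd x y) z = lip x z + lip y z.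
Proof. unfold lip, vadd; simpl; ring. Qed.

Lemma lip_addr (x y z : V3) : lip z (vadd x y) = lip z x + lip z y.
Proof. unfold lip, vadd; simpl; ring. Qed.

Lemma lip_scalel (k : R) (x z : V3) : lip (vscale k x) z = k * lip x z.
Proof. unfold lip, vscale; simpl; ring. Qed.

Lemma lip_scaler (k : R) (x z : V3) : lip z (vscale k x) = k * lip z x.
Proof. unfold lip, vscale; simpl; ring. Qed.

Lemma lip_oppl (x z : V3) : lip (vopp x) z = - lip x z.
Proof. unfold vopp; rewrite lip_scalel; ring. Qed.

Lemma vscale_eq0 (k : R) (x : V3) : k <> 0 -> vscale k x = vzero -> x = vzero.
Proof.
  intros Hk E. apply V3_ext; unfold vzero; simpl;
    [apply (f_equal v1) in E | apply (f_equal v2) in E | apply (f_equal v3) in E];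
    simpl in E; apply Rmult_integral in E; tauto.
Qed.

Lemma lcross_scalel (k : R) (x y : V3) : lcross (vscale k x) y = vscale k (lcross x y).
Proof. V3_ring. Qed.

Lemma lip_lcrossl (x y : V3) : lip (lcross x y) x = 0.
Proof. unfold lip, lcross; simpl; ring. Qed.

Lemma lip_lcrossr (x y : V3) : lip (lcross x y) y = 0.
Proof. unfold lip, lcross; simpl; ring. Qed.

Lemma lip_lcross_lcross (x y : V3) :
  lip (lcross x y) (lcross x y) = lip x y ^ 2 - lip x x * lip y y.
Proof. unfold lip, lcross; simpl; ring. Qed.

Lemma det3_lcross (x y : V3) : det3 x y (lcross y x) = lip (lcross y x) (lcross y x).
Proof. unfold det3, lip, lcross; simpl; ring. Qed.

Lemma det3_lip_lcross (x y z e : V3) :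
  vscale (det3 x y z) e =
  vopp (vadd (vscale (lip e x) (lcross y z))
             (vadd (vscale (lip e y) (lcross z x)) (vscale (lip e z) (lcross x y)))).
Proof. unfold det3, lip; V3_ring. Qed.

Lemma lip_orth_basis_eq0 (x y z e : V3) :
  det3 x y z <> 0 -> lip e x = 0 -> lip e y = 0 -> lip e z = 0 -> e = vzero.
Proof.
  intros Hd Hx Hy Hz. apply (vscale_eq0 (det3 x y z)); auto.
  rewrite det3_lip_lcross, Hx, Hy, Hz. V3_ring.
Qed.

Record lorentz_frame (q h a : V3) : Prop := {
  frame_qq : lip q q = -1;
  frame_hh : lip h h = 1;
  frame_aa : lip a a = 1;
  frame_hq : lip h q = 0;
  frame_aq : lip a q = 0;
  frame_ah : lip a h = 0;
  frame_det : det3 q h a = 1 }.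

Lemma frame_expansion (q h a v : V3) : lorentz_frame q h a ->
  v = vadd (vscale (- lip v q) q) (vadd (vscale (lip v h) h) (vscale (lip v a) a)).
Proof.
  intros [Hqq Hhh Haa Hhq Haq Hah Hdet].
  set (w := vadd (vscale (- lip v q) q) (vadd (vscale (lip v h) h) (vscale (lip v a) a))).
  assert (Hw : vadd v (vopp w) = vzero).
  { apply (lip_orth_basis_eq0 q h a); [rewrite Hdet; lra| | |];
      unfold w; rewrite lip_addl, lip_oppl, !lip_addl, !lip_scalel;
      rewrite ?(lip_sym q h), ?(lip_sym q a), ?(lip_sym h a), ?Hqq, ?Hhh, ?Haa, ?Hhq, ?Haq, ?Hah;
      ring. }
  unfold w in Hw |- *. V3_lra Hw.
Qed.

Lemma lip_lcross_det3 (W P D : V3) :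
  vscale (lip D D) (lcross W P) =
  vadd (vscale (- det3 W P D) D)
       (vadd (vscale (lip W D) (lcross D P)) (vscale (- lip P D) (lcross D W))).
Proof. unfold det3, lip; V3_ring. Qed.

Lemma lcross_lcross (W P X : V3) :
  lcross (lcross W P) X = vadd (vscale (- lip W X) P) (vscale (lip P X) W).
Proof. unfold lip; V3_ring. Qed.

Lemma parallel_of_common_normal (W P D X : V3) :
  lip D D <> 0 -> lip W D = 0 -> lip P D = 0 -> det3 W P D = 0 ->
  vscale (lip W X) P = vscale (lip P X) W.
Proof.
  intros HD HW HP Hdet.
  assert (HWP : lcross W P = vzero).
  { apply (vscale_eq0 (lip D D)); auto.
    rewrite lip_lcross_det3, HW, HP, Hdet. V3_ring. }
  pose proof (lcross_lcross W P X) as E. rewrite HWP in E. V3_lra E.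
Qed.

Definition VCinfty (U : R -> Prop) (x : R -> V3) : Prop :=
  Cinfty U (fun t => v1 (x t)) /\ Cinfty U (fun t => v2 (x t)) /\ Cinfty U (fun t => v3 (x t)).

Definition vex_derive (x : R -> V3) (t : R) : Prop :=
  ex_derive (fun t => v1 (x t)) t /\ ex_derive (fun t => v2 (x t)) t /\
  ex_derive (fun t => v3 (x t)) t.

Lemma vsmooth_on_VCinfty (U : R -> Prop) (x : R -> V3) : vsmooth_on U x -> VCinfty U x.
Proof. intros (S1 & S2 & S3). repeat split; apply smooth_on_Cinfty; auto. Qed.

Lemma vD_add (x y : R -> V3) (t : R) : vex_derive x t -> vex_derive y t ->
  vD (fun s => vadd (x s) (y s)) t = vadd (vD x t) (vD y t).
Proof.
  intros (X1 & X2 & X3) (Y1 & Y2 & Y3).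
  apply V3_ext; unfold vD, vadd; simpl; apply Derive_plus; auto.
Qed.

Lemma vD_scale (k : R) (x : R -> V3) (t : R) :
  vD (fun s => vscale k (x s)) t = vscale k (vD x t).
Proof. apply V3_ext; unfold vD, vscale; simpl; apply Derive_scal. Qed.

Lemma vD_opp (x : R -> V3) (t : R) : vD (fun s => vopp (x s)) t = vopp (vD x t).
Proof. apply vD_scale. Qed.

Lemma Derive_lip (x y : R -> V3) (t : R) : vex_derive x t -> vex_derive y t ->
  Derive (fun t => lip (x t) (y t)) t = lip (vD x t) (y t) + lip (x t) (vD y t).
Proof.
  intros (X1 & X2 & X3) (Y1 & Y2 & Y3). unfold lip, vD; simpl.
  set (x1 := fun t => v1 (x t)) in *. set (x2 := fun t => v2 (x t)) in *.
  set (x3 := fun t => v3 (x t)) in *. set (y1 := fun t => v1 (y t)) in *.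
  set (y2 := fun t => v2 (y t)) in *. set (y3 := fun t => v3 (y t)) in *.
  change (Derive (fun t => - x1 t * y1 t + x2 t * y2 t + x3 t * y3 t) t =
    - Derive x1 t * y1 t + Derive x2 t * y2 t + Derive x3 t * y3 t +
    (- x1 t * Derive y1 t + x2 t * Derive y2 t + x3 t * Derive y3 t)).
  apply is_derive_unique. auto_derive; [repeat split; auto|].
  unfold x1, x2, x3, y1, y2, y3; ring.
Qed.

Section VCinfty.

Variable U : R -> Prop.
Hypothesis U_open : open U.

Ltac Cinfty_poly :=
  unfold Rminus;
  repeat first [ assumption | apply (Cinfty_plus _ U_open) | apply (Cinfty_opp _ U_open)
               | apply (Cinfty_mult _ U_open) ].

Lemma VCinfty_vex_derive (x : R -> V3) (t : R) : VCinfty U x -> U t -> vex_derive x t.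
Proof. intros (X1 & X2 & X3) Ht. repeat split; apply (Cinfty_ex_derive U); auto. Qed.

Lemma VCinfty_vD (x : R -> V3) : VCinfty U x -> VCinfty U (vD x).
Proof. intros (X1 & X2 & X3). repeat split; apply Cinfty_Derive; auto. Qed.

Lemma VCinfty_scale (k : R -> R) (x : R -> V3) :
  Cinfty U k -> VCinfty U x -> VCinfty U (fun t => vscale (k t) (x t)).
Proof. intros Hk (X1 & X2 & X3). repeat split; simpl; Cinfty_poly. Qed.

Lemma VCinfty_lcross (x y : R -> V3) :
  VCinfty U x -> VCinfty U y -> VCinfty U (fun t => lcross (x t) (y t)).
Proof. intros (X1 & X2 & X3) (Y1 & Y2 & Y3). repeat split; simpl; Cinfty_poly. Qed.

Lemma Cinfty_lip (x y : R -> V3) :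
  VCinfty U x -> VCinfty U y -> Cinfty U (fun t => lip (x t) (y t)).
Proof. intros (X1 & X2 & X3) (Y1 & Y2 & Y3). unfold lip. Cinfty_poly. Qed.

Lemma lip_vD_of_const (x y : R -> V3) (C t : R) :
  VCinfty U x -> VCinfty U y -> (forall t, U t -> lip (x t) (y t) = C) -> U t ->
  lip (vD x t) (y t) + lip (x t) (vD y t) = 0.
Proof.
  intros Hx Hy HC Ht. rewrite <- Derive_lip by (apply VCinfty_vex_derive; auto).
  rewrite (Derive_ext_loc _ (fun _ => C)) by (apply (locally_eq_on U); auto).
  apply Derive_const.
Qed.

End VCinfty.

(** * The Frenet frame of a ruled surface of type [M^1_-] *)

Lemma central_normal_of_vD (x : R -> V3) (t : R) (a : V3) (m : R) :
  lip a a = 1 -> 0 < m -> vD x t = vscale m a -> central_normal x t = a.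
Proof.
  intros Ha Hm E. unfold central_normal, lnorm. rewrite E, lip_scalel, lip_scaler, Ha.
  rewrite Rmult_1_r, Rabs_pos_eq, sqrt_square by nra.
  apply V3_ext; unfold vscale; simpl; field; lra.
Qed.

Lemma vD_central_normal_decomp (x : R -> V3) (t : R) :
  lip (vD x t) (vD x t) <> 0 -> vD x t = vscale (lnorm (vD x t)) (central_normal x t).
Proof.
  intros Hn. assert (Hl : lnorm (vD x t) <> 0).
  { unfold lnorm. intros Z. apply sqrt_eq_0 in Z; [|apply Rabs_pos].
    apply Hn, Rabs_eq_0, Z. }
  apply V3_ext; unfold central_normal, vscale; simpl; field; auto.
Qed.

Lemma spacelike_central_normal (x : R -> V3) (t : R) :
  spacelike (central_normal x t) -> 0 < lip (vD x t) (vD x t).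
Proof.
  unfold spacelike, central_normal. rewrite lip_scalel, lip_scaler. intros H.
  destruct (Rlt_or_le 0 (lip (vD x t) (vD x t))) as [Hp|Hn]; [exact Hp|].
  set (k := / lnorm (vD x t)) in H. nra.
Qed.

Lemma asymptotic_normal_lcross (q : R -> V3) (t : R) :
  asymptotic_normal q t = lcross (central_normal q t) (q t).
Proof. unfold asymptotic_normal, central_normal. now rewrite lcross_scalel. Qed.

Section Frenet.

Variables (U : R -> Prop) (q : R -> V3).
Hypothesis U_open : open U.
Hypothesis q_smooth : VCinfty U q.
Hypothesis q_unit_timelike : forall t, U t -> lip (q t) (q t) = -1.
Hypothesis dq_spacelike : forall t, U t -> 0 < lip (vD q t) (vD q t).

Lemma dsig1_sqrt (t : R) : U t -> dsig1 q t = sqrt (lip (vD q t) (vD q t)).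
Proof.
  intros Ht. unfold dsig1, lnorm. rewrite Rabs_pos_eq; auto. apply Rlt_le; auto.
Qed.

Lemma dsig1_pos (t : R) : U t -> 0 < dsig1 q t.
Proof. intros Ht. rewrite dsig1_sqrt by auto. apply sqrt_lt_R0; auto. Qed.

Lemma dsig1_sq (t : R) : U t -> dsig1 q t * dsig1 q t = lip (vD q t) (vD q t).
Proof.
  intros Ht. rewrite dsig1_sqrt by auto. apply sqrt_sqrt, Rlt_le; auto.
Qed.

Lemma Cinfty_dsig1 : Cinfty U (dsig1 q).
Proof.
  apply (Cinfty_ext U U_open (fun t => sqrt (lip (vD q t) (vD q t)))).
  - intros t Ht. symmetry. apply dsig1_sqrt; auto.
  - apply Cinfty_sqrt; auto. apply Cinfty_lip; auto; apply VCinfty_vD; auto.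
Qed.

Lemma Cinfty_inv_dsig1 : Cinfty U (fun t => / dsig1 q t).
Proof.
  apply Cinfty_inv; auto; [|exact Cinfty_dsig1].
  intros t Ht. apply Rgt_not_eq, dsig1_pos; auto.
Qed.

Lemma VCinfty_central_normal : VCinfty U (central_normal q).
Proof.
  apply (VCinfty_scale U U_open (fun t => / dsig1 q t) (vD q)).
  - exact Cinfty_inv_dsig1.
  - apply VCinfty_vD; auto.
Qed.

Lemma VCinfty_asymptotic_normal : VCinfty U (asymptotic_normal q).
Proof.
  apply (VCinfty_scale U U_open (fun t => / dsig1 q t) (fun t => lcross (vD q t) (q t))).
  - exact Cinfty_inv_dsig1.
  - apply VCinfty_lcross; auto. apply VCinfty_vD; auto.
Qed.

Lemma vD_q_central_normal (t : R) : U t -> vD q t = vscale (dsig1 q t) (central_normal q t).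
Proof.
  intros Ht. pose proof (dsig1_pos t Ht).
  apply V3_ext; unfold central_normal, dsig1, vscale in *; simpl; field; lra.
Qed.

Lemma frenet_frame (t : R) : U t ->
  lorentz_frame (q t) (central_normal q t) (asymptotic_normal q t).
Proof.
  intros Ht. pose proof (dsig1_pos t Ht) as Hf.
  assert (Hdq : lip (vD q t) (q t) = 0).
  { pose proof (lip_vD_of_const U U_open q q (-1) t q_smooth q_smooth q_unit_timelike Ht) as E.
    rewrite (lip_sym (q t)) in E. lra. }
  assert (Hhh : lip (central_normal q t) (central_normal q t) = 1).
  { unfold central_normal. rewrite lip_scalel, lip_scaler.
    fold (dsig1 q t). rewrite <- dsig1_sq by auto. field. lra. }
  assert (Hhq : lip (central_normal q t) (q t) = 0).
  { unfold central_normal. rewrite lip_scalel, Hdq. ring. }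
  rewrite asymptotic_normal_lcross.
  split; auto.
  - rewrite lip_lcross_lcross, Hhh, q_unit_timelike, Hhq by auto. ring.
  - apply lip_lcrossr.
  - apply lip_lcrossl.
  - rewrite det3_lcross, lip_lcross_lcross, Hhh, q_unit_timelike, Hhq by auto. ring.
Qed.

Lemma lip_vD_central_normal_asymptotic_normal (t : R) : U t ->
  lip (vD (central_normal q) t) (asymptotic_normal q t) = dsig1 q t * conical_curvature q t.
Proof.
  intros Ht. pose proof (dsig1_pos t Ht).
  unfold conical_curvature. rewrite (frame_aa _ _ _ (frenet_frame t Ht)). field. lra.
Qed.

Lemma Cinfty_conical_curvature : Cinfty U (conical_curvature q).
Proof.
  apply (Cinfty_ext U U_open (fun t => lip (vD (central_normal q) t) (asymptotic_normal q t)
                                        * / dsig1 q t)).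
  - intros t Ht. rewrite lip_vD_central_normal_asymptotic_normal by auto.
    pose proof (dsig1_pos t Ht). field. lra.
  - apply Cinfty_mult; auto; [|exact Cinfty_inv_dsig1].
    apply Cinfty_lip; auto;
      [apply VCinfty_vD, VCinfty_central_normal | apply VCinfty_asymptotic_normal]; auto.
Qed.

Lemma vD_central_normal (t : R) : U t ->
  vD (central_normal q) t =
  vadd (vscale (dsig1 q t) (q t))
       (vscale (dsig1 q t * conical_curvature q t) (asymptotic_normal q t)).
Proof.
  intros Ht. pose proof (frenet_frame t Ht) as F.
  assert (Hh : lip (vD (central_normal q) t) (central_normal q t) = 0).
  { pose proof (lip_vD_of_const U U_open _ _ 1 t VCinfty_central_normal VCinfty_central_normal
      (fun t Ht => frame_hh _ _ _ (frenet_frame t Ht)) Ht) as E.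
    rewrite (lip_sym (central_normal q t)) in E. lra. }
  assert (Hq : lip (vD (central_normal q) t) (q t) = - dsig1 q t).
  { pose proof (lip_vD_of_const U U_open _ _ 0 t VCinfty_central_normal q_smooth
      (fun t Ht => frame_hq _ _ _ (frenet_frame t Ht)) Ht) as E.
    rewrite vD_q_central_normal, lip_scaler, (frame_hh _ _ _ F) in E by auto. lra. }
  rewrite (frame_expansion _ _ _ (vD (central_normal q) t) F) at 1.
  rewrite Hh, Hq, lip_vD_central_normal_asymptotic_normal by auto. V3_ring.
Qed.

Lemma vD_asymptotic_normal (t : R) : U t ->
  vD (asymptotic_normal q) t = vscale (- (dsig1 q t * conical_curvature q t)) (central_normal q t).
Proof.
  intros Ht. pose proof (frenet_frame t Ht) as F.
  pose proof VCinfty_central_normal as Hh. pose proof VCinfty_asymptotic_normal as Ha.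
  assert (Da : lip (vD (asymptotic_normal q) t) (asymptotic_normal q t) = 0).
  { pose proof (lip_vD_of_const U U_open _ _ 1 t Ha Ha
      (fun t Ht => frame_aa _ _ _ (frenet_frame t Ht)) Ht) as E.
    rewrite (lip_sym (asymptotic_normal q t)) in E. lra. }
  assert (Dq : lip (vD (asymptotic_normal q) t) (q t) = 0).
  { pose proof (lip_vD_of_const U U_open _ _ 0 t Ha q_smooth
      (fun t Ht => frame_aq _ _ _ (frenet_frame t Ht)) Ht) as E.
    rewrite vD_q_central_normal, lip_scaler, (frame_ah _ _ _ F) in E by auto. lra. }
  assert (Dh : lip (vD (asymptotic_normal q) t) (central_normal q t)
               = - (dsig1 q t * conical_curvature q t)).
  { pose proof (lip_vD_of_const U U_open _ _ 0 t Ha Hh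
      (fun t Ht => frame_ah _ _ _ (frenet_frame t Ht)) Ht) as E.
    rewrite (lip_sym (asymptotic_normal q t)), lip_vD_central_normal_asymptotic_normal in E
      by auto. lra. }
  rewrite (frame_expansion _ _ _ (vD (asymptotic_normal q) t) F) at 1.
  rewrite Da, Dq, Dh. V3_ring.
Qed.

End Frenet.

(** * Offsets along the asymptotic normal *)

Definition offset_curve (c q : R -> V3) (Rc : R) (s : R) : V3 :=
  vadd (c s) (vscale Rc (asymptotic_normal q s)).

Definition offset_coef (q : R -> V3) (Rc : R) (s : R) : R :=
  Rc * (dsig1 q s * conical_curvature q s).

Lemma lip_vD_of_central_normal (x : R -> V3) (t : R) (y : V3) :
  lip (vD x t) (vD x t) <> 0 -> lip (central_normal x t) y = 0 -> lip (vD x t) y = 0.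
Proof.
  intros Hn Hy. rewrite (vD_central_normal_decomp x t Hn), lip_scalel, Hy. ring.
Qed.

Lemma riccati_product_iff (f k : R -> R) (Rc s : R) :
  Rc <> 0 -> f s <> 0 -> ex_derive f s -> ex_derive k s ->
  Derive (fun t => Rc * (f t * k t)) s + f s * ((Rc * (f s * k s)) ^ 2 - 1) = 0
  <-> Derive k s = - / Rc * (Rc ^ 2 * k s ^ 2 * f s ^ 2 - 1) - / f s * Derive f s * k s.
Proof.
  intros HR Hf Df Dk. rewrite Derive_scal, Derive_mult by auto.
  split; intros E.
  - apply (Rmult_eq_reg_l (Rc * f s)); [|now apply Rmult_integral_contrapositive].
    replace (Rc * f s * Derive k s)
      with (Rc * (Derive f s * k s + f s * Derive k s) - Rc * Derive f s * k s) by ring.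
    replace (Rc * (Derive f s * k s + f s * Derive k s))
      with (- (f s * ((Rc * (f s * k s)) ^ 2 - 1))) by lra.
    field. auto.
  - rewrite E. field. auto.
Qed.

Section Offset.

Variables (U : R -> Prop) (q c qs : R -> V3) (Rc e : R).
Hypothesis U_open : open U.
Hypothesis q_smooth : VCinfty U q.
Hypothesis q_unit_timelike : forall t, U t -> lip (q t) (q t) = -1.
Hypothesis dq_spacelike : forall t, U t -> 0 < lip (vD q t) (vD q t).
Hypothesis c_smooth : VCinfty U c.
Hypothesis vD_c : forall t, U t -> vD c t = q t.
Hypothesis qs_smooth : VCinfty U qs.
Hypothesis e_neq0 : e <> 0.
Hypothesis qs_unit : forall t, U t -> lip (qs t) (qs t) = e.
Hypothesis dqs_nonnull : forall t, U t -> lip (vD qs t) (vD qs t) <> 0.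
Hypothesis qs_striction : forall t, U t -> lip (vD qs t) (vD (offset_curve c q Rc) t) = 0.
Hypothesis qs_developable :
  forall t, U t -> det3 (vD (offset_curve c q Rc) t) (qs t) (vD qs t) = 0.

Let frame (t : R) :
  U t -> lorentz_frame (q t) (central_normal q t) (asymptotic_normal q t).
Proof. apply frenet_frame; auto. Qed.

Lemma vD_offset_curve (t : R) : U t ->
  vD (offset_curve c q Rc) t = vadd (q t) (vscale (- offset_coef q Rc t) (central_normal q t)).
Proof.
  intros Ht. unfold offset_curve.
  assert (Ha : VCinfty U (fun s => vscale Rc (asymptotic_normal q s))).
  { apply (VCinfty_scale U U_open (fun _ => Rc)); [apply Cinfty_const; auto|].
    apply VCinfty_asymptotic_normal; auto. }
  rewrite vD_add, vD_scale, vD_c, (vD_asymptotic_normal U q) by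
    (auto; apply (VCinfty_vex_derive U); auto).
  unfold offset_coef. V3_ring.
Qed.

Lemma offset_ruling (t : R) : U t ->
  qs t = vscale (- lip (qs t) (q t))
           (vadd (q t) (vscale (- offset_coef q Rc t) (central_normal q t))).
Proof.
  intros Ht. pose proof (frame t Ht) as F.
  assert (Hqs : lip (vD qs t) (qs t) = 0).
  { pose proof (lip_vD_of_const U U_open qs qs e t qs_smooth qs_smooth qs_unit Ht) as E.
    rewrite (lip_sym (qs t)) in E. lra. }
  pose proof (parallel_of_common_normal _ (qs t) (vD qs t) (q t) (dqs_nonnull t Ht)
    (eq_trans (lip_sym _ _) (qs_striction t Ht)) (eq_trans (lip_sym _ _) Hqs)
    (qs_developable t Ht)) as E.
  rewrite vD_offset_curve, lip_addl, lip_scalel, (frame_qq _ _ _ F), (frame_hq _ _ _ F) in E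
    by auto.
  V3_lra E.
Qed.

Lemma offset_ruling_orth_asymptotic_normal (t : R) : U t ->
  lip (qs t) (asymptotic_normal q t) = 0.
Proof.
  intros Ht. pose proof (frame t Ht) as F.
  rewrite offset_ruling, lip_scalel, lip_addl, lip_scalel, (lip_sym (q t)), (frame_aq _ _ _ F),
    (lip_sym (central_normal q t)), (frame_ah _ _ _ F) by auto. ring.
Qed.

Lemma lip_offset_ruling_central_normal (t : R) : U t ->
  lip (qs t) (central_normal q t) = lip (qs t) (q t) * offset_coef q Rc t.
Proof.
  intros Ht. pose proof (frame t Ht) as F.
  rewrite (offset_ruling t Ht) at 1.
  rewrite lip_scalel, lip_addl, lip_scalel, (frame_hh _ _ _ F), (lip_sym (q t)),
    (frame_hq _ _ _ F).
  ring.
Qed.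

Lemma offset_ruling_norm (t : R) : U t ->
  lip (qs t) (q t) ^ 2 * (offset_coef q Rc t ^ 2 - 1) = e.
Proof.
  intros Ht.
  rewrite <- (qs_unit t Ht). rewrite (offset_ruling t Ht) at 2.
  rewrite lip_scalel, lip_addl, lip_scalel, (lip_sym (q t)), (lip_sym (central_normal q t)),
    lip_offset_ruling_central_normal by auto.
  ring.
Qed.

Lemma offset_coef_sq_neq1 (t : R) : U t -> offset_coef q Rc t ^ 2 - 1 <> 0.
Proof. intros Ht Z. apply e_neq0. rewrite <- (offset_ruling_norm t Ht), Z. ring. Qed.

Lemma lip_offset_ruling_neq0 (t : R) : U t -> lip (qs t) (q t) <> 0.
Proof. intros Ht Z. apply e_neq0. rewrite <- (offset_ruling_norm t Ht), Z. ring. Qed.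

Lemma lip_vD_offset_ruling_q (t : R) : U t ->
  lip (vD qs t) (q t) = offset_coef q Rc t * lip (vD qs t) (central_normal q t).
Proof.
  intros Ht. pose proof (qs_striction t Ht) as E.
  rewrite vD_offset_curve, lip_addr, lip_scaler in E by auto. lra.
Qed.

(* Differentiating [lip_offset_ruling_central_normal] and using the Frenet formulas. *)
Lemma offset_ruling_ode (t : R) : U t ->
  lip (vD qs t) (central_normal q t) * (offset_coef q Rc t ^ 2 - 1) =
  - lip (qs t) (q t) *
    (Derive (offset_coef q Rc) t + dsig1 q t * (offset_coef q Rc t ^ 2 - 1)).
Proof.
  intros Ht.
  assert (Hh : VCinfty U (central_normal q)) by (apply VCinfty_central_normal; auto).
  assert (Dg : ex_derive (offset_coef q Rc) t).
  { apply (Cinfty_ex_derive U); auto. apply (Cinfty_mult U U_open); [apply Cinfty_const; auto|].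
    apply (Cinfty_mult U U_open).
    - apply Cinfty_dsig1; auto.
    - apply Cinfty_conical_curvature; auto. }
  assert (Dlip : ex_derive (fun t => lip (qs t) (q t)) t).
  { apply (Cinfty_ex_derive U); auto. apply Cinfty_lip; auto. }
  assert (E : Derive (fun t => lip (qs t) (central_normal q t)) t
              = Derive (fun t => lip (qs t) (q t) * offset_coef q Rc t) t).
  { apply Derive_ext_loc, (locally_eq_on U); auto. apply lip_offset_ruling_central_normal. }
  rewrite Derive_mult, !Derive_lip in E by (auto; apply (VCinfty_vex_derive U); auto).
  rewrite (vD_central_normal U q), (vD_q_central_normal U q), lip_addr, !lip_scaler,
    offset_ruling_orth_asymptotic_normal, lip_offset_ruling_central_normal,
    lip_vD_offset_ruling_q in E by auto.
  lra.
Qed.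

Lemma vD_offset_ruling_of_orth (t : R) : U t ->
  lip (vD qs t) (central_normal q t) = 0 ->
  vD qs t = vscale (lip (vD qs t) (asymptotic_normal q t)) (asymptotic_normal q t).
Proof.
  intros Ht HB. pose proof (frame t Ht) as F.
  rewrite (frame_expansion _ _ _ (vD qs t) F) at 1.
  rewrite lip_vD_offset_ruling_q, HB by auto. V3_ring.
Qed.

Lemma orth_iff_conical_curvature_ode (t : R) : Rc <> 0 -> U t ->
  lip (vD qs t) (central_normal q t) = 0 <->
  Derive (conical_curvature q) t =
    - / Rc * (Rc ^ 2 * conical_curvature q t ^ 2 * dsig1 q t ^ 2 - 1)
    - / dsig1 q t * Derive (dsig1 q) t * conical_curvature q t.
Proof.
  intros HR Ht. assert (Hf : 0 < dsig1 q t) by (apply (dsig1_pos U); auto).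
  assert (Df : ex_derive (dsig1 q) t).
  { apply (Cinfty_ex_derive U); auto. apply Cinfty_dsig1; auto. }
  assert (Dk : ex_derive (conical_curvature q) t).
  { apply (Cinfty_ex_derive U); auto. apply Cinfty_conical_curvature; auto. }
  rewrite <- riccati_product_iff by (auto; lra).
  pose proof (offset_ruling_ode t Ht) as E. unfold offset_coef in E |- *.
  pose proof (offset_coef_sq_neq1 t Ht) as Hg. pose proof (lip_offset_ruling_neq0 t Ht) as Hl.
  unfold offset_coef in Hg. split; intros Z.
  - rewrite Z, Rmult_0_l in E. symmetry in E.
    apply Rmult_integral in E. destruct E as [E|E]; [lra|exact E].
  - rewrite Z, Rmult_0_r in E. apply Rmult_integral in E. tauto.
Qed.

Lemma mannheim_offset_surface_orth :
  mannheim_offset_surface U c q (offset_curve c q Rc) qs ->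
  forall t, U t -> lip (vD qs t) (central_normal q t) = 0.
Proof.
  intros HM t Ht. pose proof (frame t Ht) as F.
  destruct HM as [HM|HM].
  - apply lip_vD_of_central_normal; auto. rewrite HM by auto. apply (frame_ah _ _ _ F).
  - assert (E : lip (vD (fun s => vopp (qs s)) t) (central_normal q t) = 0).
    { apply lip_vD_of_central_normal.
      - rewrite vD_opp. unfold vopp. rewrite lip_scalel, lip_scaler.
        pose proof (dqs_nonnull t Ht). lra.
      - rewrite HM by auto. apply (frame_ah _ _ _ F). }
    rewrite vD_opp, lip_oppl in E. lra.
Qed.

Lemma mannheim_offset_surface_of_orth :
  (forall x y z, U x -> U y -> x <= z <= y -> U z) ->
  (forall t, U t -> lip (vD qs t) (central_normal q t) = 0) ->
  mannheim_offset_surface U c q (offset_curve c q Rc) qs.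
Proof.
  intros Hconv HB.
  set (mu := fun t => lip (vD qs t) (asymptotic_normal q t)).
  assert (Dqs : forall t, U t -> vD qs t = vscale (mu t) (asymptotic_normal q t)).
  { intros t Ht. apply vD_offset_ruling_of_orth; auto. }
  assert (Hmu : forall t, U t -> mu t <> 0).
  { intros t Ht Z. apply (dqs_nonnull t Ht). rewrite (Dqs t Ht), Z, lip_scalel. ring. }
  assert (Cmu : forall t, U t -> continuous mu t).
  { intros t Ht. apply (Cinfty_continuous U); auto.
    apply Cinfty_lip; auto; [apply VCinfty_vD | apply VCinfty_asymptotic_normal]; auto. }
  destruct (continuous_nonzero_sign U mu Hconv Cmu Hmu) as [Hpos|Hneg]; [left|right];
    intros t Ht; pose proof (frame_aa _ _ _ (frame t Ht)) as Haa.
  - apply (central_normal_of_vD _ _ _ (mu t)); auto.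
  - apply (central_normal_of_vD _ _ _ (- mu t)); auto.
    + specialize (Hneg t Ht). lra.
    + rewrite vD_opp, Dqs by auto. unfold vopp. V3_ring.
Qed.

End Offset.

Lemma interval_open (a b : Rbar) : open (interval a b).
Proof. apply open_and; [apply open_Rbar_gt | apply open_Rbar_lt]. Qed.

Lemma interval_convex (a b : Rbar) (x y z : R) :
  interval a b x -> interval a b y -> x <= z <= y -> interval a b z.
Proof.
  intros [Ax _] [_ By] [Hxz Hzy]. split.
  - apply (Rbar_lt_le_trans _ x); [exact Ax | exact Hxz].
  - apply (Rbar_le_lt_trans _ y); [exact Hzy | exact By].
Qed.

Lemma developable_det3 (I : R -> Prop) (c q : R -> V3) :
  (forall s, I s -> lip (vD q s) (vD q s) <> 0) -> developable I c q ->
  forall s, I s -> det3 (vD c s) (q s) (vD q s) = 0.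
Proof.
  intros Hn Hdev s Hs. pose proof (Hdev s Hs) as D. unfold distribution_parameter, Rdiv in D.
  apply Rmult_integral in D. destruct D as [D|D]; auto.
  exfalso. revert D. apply Rinv_neq_0_compat; auto.
Qed.

Lemma type_Mminus_lip (I : R -> Prop) (q : R -> V3) (eps : R) :
  (eps = 1 \/ eps = -1) -> (forall s, I s -> lip (q s) (q s) = eps) -> type_Mminus I q ->
  forall s, I s -> lip (q s) (q s) = -1 /\ 0 < lip (vD q s) (vD q s).
Proof.
  intros He Hq HM s Hs. destruct (HM s Hs) as [Ht Hh]. unfold timelike in Ht.
  split.
  - rewrite Hq in *; auto. destruct He; lra.
  - apply spacelike_central_normal; auto.
Qed.

Theorem theorem5p2 (a b : Rbar) (c q : R -> V3) (Rc : R) :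
  Rbar_lt a b ->
  ruled_surface (interval a b) c q ->
  arclength_param (interval a b) c ->
  (forall s, interval a b s -> vD c s = q s) ->
  developable (interval a b) c q ->
  type_Mminus (interval a b) q ->
  Rc <> 0 ->
  forall qs : R -> V3,
  ruled_surface (interval a b)
    (fun s => vadd (c s) (vscale Rc (asymptotic_normal q s))) qs ->
  developable (interval a b)
    (fun s => vadd (c s) (vscale Rc (asymptotic_normal q s))) qs ->
  (type_Mplus (interval a b) qs \/ type_Mminus (interval a b) qs) ->
  (mannheim_offset_surface (interval a b) c q
     (fun s => vadd (c s) (vscale Rc (asymptotic_normal q s))) qs
   <->
   forall s, interval a b s ->
     Derive (conical_curvature q) s =
       - / Rc * (Rc ^ 2 * conical_curvature q s ^ 2 * dsig1 q s ^ 2 - 1)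
       - / dsig1 q s * Derive (dsig1 q) s * conical_curvature q s).
Proof.
  intros _ Hrs _ Hcq _ Hmm HR qs Hrs2 Hdev2 _.
  destruct Hrs as (Sc & Sq & (e2 & He2 & Hqe) & _ & _).
  destruct Hrs2 as (_ & Sqs & (e3 & He3 & Hqse) & Hdqs & Hstr).
  pose proof (interval_open a b) as HU.
  assert (Hqq : forall s, interval a b s -> lip (q s) (q s) = -1)
    by (intros s Hs; apply (type_Mminus_lip (interval a b) q e2); auto).
  assert (Hdq : forall s, interval a b s -> 0 < lip (vD q s) (vD q s))
    by (intros s Hs; apply (type_Mminus_lip (interval a b) q e2); auto).
  apply vsmooth_on_VCinfty in Sc, Sq, Sqs.
  pose proof (developable_det3 _ _ _ Hdqs Hdev2) as Hdet.
  assert (He3' : e3 <> 0) by (destruct He3; lra).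
  split.
  - intros HM s Hs. apply (orth_iff_conical_curvature_ode (interval a b) q c qs Rc e3); auto.
    apply (mannheim_offset_surface_orth (interval a b) q c qs Rc); auto.
  - intros HO. apply (mannheim_offset_surface_of_orth (interval a b) q c qs Rc); auto.
    + apply interval_convex.
    + intros t Ht. apply (orth_iff_conical_curvature_ode (interval a b) q c qs Rc e3); auto.
Qed.
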